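(* Let $\ell\in\mathbb{N}$, $h\in\bigwedge(V_{2\ell}^* )$, and let $G$ be an Eulerian graph. Then the value $s_h((G,\omega,\kappa))$ is the same for every Eulerian orientation $\omega$ of $G$ and every local ordering $\kappa$ compatible with $\omega$.
   Context: Graphs may have loops and multiple edges; a graph is Eulerian if every vertex has even degree. $V_{2\ell}=\mathbb{C}^{2\ell}$ with standard basis $e_1,\dots,e_{2\ell}$; $f_i=-e_{i+\ell}$ for $i\le\ell$, $f_i=e_{i-\ell}$ for $i>\ell$. $\bigwedge(V_{2\ell}^* )=\bigoplus_{n=0}^{2\ell}\bigwedge^n(V_{2\ell}^* )$, and $h$ applied to an $n$-fold tensor means its component $h^n\in\bigwedge^n(V_{2\ell}^* )$ (a skew-symmetric $n$-linear form) applied to it. An Eulerian orientation $\omega$ orients each edge so each vertex has equal in- and out-degree (a loop contributes one incoming and one outgoing arc). A local ordering $\kappa$ compatible with $\omega$ consists, at each vertex $v$ of degree $d(v)$, of bijections $\kappa_v^-:\delta^-(v)\to\{1,3,\dots,d(v)-1\}$ (incoming arcs) and $\kappa_v^+:\delta^+(v)\to\{2,4,\dots,d(v)\}$ (outgoing arcs); $\kappa_v^{-1}(i)$ denotes the arc at $v$ with label $i$. $\kappa$ decomposes the edge set uniquely into closed walks $(v_1,a_1,\dots,a_i,v_i,a_{i+1},\dots,v_1)$ with $\kappa^-_{v_i}(a_i)+1=\kappa^+_{v_i}(a_{i+1})$ ($\kappa$-circuits); $c(G,\kappa)$ is their number. Define $s_h((G,\omega,\kappa))=(-1)^{c(G,\kappa)}\sum_{\phi:E(G)\to[2\ell]}\prod_{v\in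 V(G)} h\big(\bigotimes_{i=1,3,\dots,d(v)-1} e_{\phi(\kappa_v^{-1}(i))}\otimes f_{\phi(\kappa_v^{-1}(i+1))}\big)$. *)

From HB Require Import structures.
From mathcomp Require Import all_boot all_order all_algebra.
Set Implicit Arguments. Unset Strict Implicit. Unset Printing Implicit Defensive.
Import GRing.Theory Num.Theory.

(* Half-edges are pairs (e, b) : E * bool;
   (e, false) sits at (ends e).1 and (e, true) at (ends e).2.  A loop has
   both half-edges at the same vertex, so it contributes 2 to the degree. *)
Section Graph.
Variables (V E : finType) (ends : E -> V * V).

Definition hend (x : E * bool) : V := if x.2 then (ends x.1).2 else (ends x.1).1.
Definition at_v (v : V) : {pred E * bool} := [pred x | hend x == v].
Definition deg (v : V) : nat := #|at_v v|.
Definition eulerian_graph : Prop := forall v, ~~ odd (deg v).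

(* An orientation omega : E -> bool: the half-edge (e, omega e) is the tail
   (outgoing arc at its vertex), (e, ~~ omega e) is the head (incoming). *)
Variable omega : E -> bool.
Definition outgoing (x : E * bool) : bool := x.2 == omega x.1.
Definition in_at (v : V) : {pred E * bool} := [pred x | at_v v x && ~~ outgoing x].
Definition out_at (v : V) : {pred E * bool} := [pred x | at_v v x && outgoing x].
Definition eulerian_orientation : Prop := forall v, #|out_at v| = #|in_at v|.

Variable kappa : E * bool -> nat.
Definition compatible_ordering : Prop := forall v,
  [/\ {in in_at v &, injective kappa},
      (forall i, (exists2 x, x \in in_at v & kappa x = i) <->
                 [/\ odd i, (1 <= i)%N & (i <= deg v)%N]),
      {in out_at v &, injective kappa} &
      (forall i, (exists2 x, x \in out_at v & kappa x = i) <->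
                 [/\ ~~ odd i, (1 <= i)%N & (i <= deg v)%N])].

(* kappa-circuits: after entering the head vertex w of arc e with label k,
   continue along the arc leaving w with label k+1. *)
Definition kstep (e : E) : E :=
  let w := hend (e, ~~ omega e) in
  let k := kappa (e, ~~ omega e) in
  odflt e [pick e' | (hend (e', omega e') == w) && (kappa (e', omega e') == k.+1)].
Definition ncircuits : nat := fcard kstep (mem (@predT E)).

Definition lab_edge (v : V) (k : nat) : option E :=
  omap fst [pick x | at_v v x && (kappa x == k.+1)].

Local Open Scope ring_scope.
Variables (F : fieldType) (l : nat).

(* V_{2l} = F^{2l} as row vectors indexed by 'I_(l + l) (0-based). *)
Definition ev (i : 'I_(l + l)) : 'rV[F]_(l + l) := delta_mx 0 i.
Definition fv (i : 'I_(l + l)) : 'rV[F]_(l + l) :=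
  match split i with
  | inl j => - ev (rshift l j)   (* i <= l :  f_i = - e_{i+l} *)
  | inr j => ev (lshift l j)     (* i >  l :  f_i =   e_{i-l} *)
  end.

(* An element h of the exterior algebra of V^*: for each n, its component
   h n is a skew-symmetric n-linear form on V. *)
Definition form_family := forall n : nat, {ffun 'I_n -> 'rV[F]_(l + l)} -> F.

Definition multilinear n (g : {ffun 'I_n -> 'rV[F]_(l + l)} -> F) : Prop :=
  forall (x : {ffun 'I_n -> 'rV[F]_(l + l)}) (k : 'I_n) (a : F) (u w : 'rV[F]_(l + l)),
    g [ffun j => if j == k then a *: u + w else x j]
    = a * g [ffun j => if j == k then u else x j]
      + g [ffun j => if j == k then w else x j].

Definition skew_symmetric n (g : {ffun 'I_n -> 'rV[F]_(l + l)} -> F) : Prop :=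
  forall (x : {ffun 'I_n -> 'rV[F]_(l + l)}) (i j : 'I_n), i != j ->
    g [ffun k => x (if k == i then j else if k == j then i else k)] = - g x.

Definition exterior_form (h : form_family) : Prop :=
  forall n, multilinear (h n) /\ skew_symmetric (h n).

(* tensor e_{phi(k^-1(1))} (x) f_{phi(k^-1(2))} (x) ... at vertex v *)
Definition vtensor (phi : {ffun E -> 'I_(l + l)}) (v : V) : {ffun 'I_(deg v) -> 'rV[F]_(l + l)} :=
  [ffun k : 'I_(deg v) => match lab_edge v k with
                          | Some e => if ~~ odd k then ev (phi e) else fv (phi e)
                          | None => 0
                          end : 'rV[F]_(l + l)].

Definition s_h (h : form_family) : F :=
  (-1) ^+ ncircuits *
  \sum_(phi : {ffun E -> 'I_(l + l)}) \prod_(v : V) h (deg v) (vtensor phi v).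

End Graph.

(* Fix one compatible pair (om1, k1).  Any other pair (om2, k2) is obtained by
   a permutation r of the half-edges that preserves their end vertices, followed
   by the reversal of the edges on which om1 and om2 differ.  Skew-symmetry of h
   multiplies the state sum by sign(r) under r, and reversing an edge while
   substituting i -> i +- l for its index (which exchanges e_i and +-f_i) negates
   it.  The kappa-circuits are the cycles of a permutation of the edges; comparing
   the circuit permutations of the two pairs through r shows that the parity of
   their numbers of circuits differs by exactly the same two contributions. *)

From HB Require Import structures.
From mathcomp Require Import all_boot all_order all_algebra all_fingroup zify.
Set Implicit Arguments. Unset Strict Implicit. Unset Printing Implicit Defensive.
Import GRing.Theory.
Local Open Scope ring_scope.

Section HalfEdgePermutations.
Variable E : finType.
Local Open Scope group_scope.

Definition sheet_fun (b : bool) (g : {perm E}) (x : E * bool) : E * bool :=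
  if x.2 == b then (g x.1, x.2) else x.

Lemma sheet_fun_inj b g : injective (sheet_fun b g).
Proof.
move=> [x1 c1] [x2 c2]; rewrite /sheet_fun /=.
case: eqP => [->|/eqP n1]; case: eqP => [->|/eqP n2] //.
- by case=> /perm_inj ->.
- by case=> _ c; rewrite c eqxx in n2.
- by case=> _ c; rewrite -c eqxx in n1.
Qed.

Definition sheet_perm b g := perm (@sheet_fun_inj b g).

Lemma sheet_permM b : {morph sheet_perm b : g1 g2 / g1 * g2}.
Proof.
move=> g1 g2; apply/permP => [[x c]]; rewrite permM !permE /sheet_fun /=.
by case: (eqVneq c b) => [->|nc]; rewrite ?eqxx ?permM // (negPf nc).
Qed.

Lemma sheet_perm1 b : sheet_perm b 1 = 1.
Proof. by apply/permP => [[x c]]; rewrite permE /sheet_fun /= !perm1; case: eqP. Qed.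

Lemma sheet_perm_tperm b x y : sheet_perm b (tperm x y) = tperm (x, b) (y, b).
Proof.
apply/permP => [[z c]]; rewrite permE /sheet_fun /=.
have [->|nc] := eqVneq c b; last first.
  by rewrite tpermD // xpair_eqE; apply/negP => /andP[_ /eqP cb]; rewrite cb eqxx in nc.
case: tpermP => [->|->|nx ny]; rewrite ?tpermL ?tpermR //.
by rewrite tpermD // xpair_eqE eqxx andbT; apply/eqP => /esym.
Qed.

Lemma odd_sheet_perm b g : odd_perm (sheet_perm b g) = odd_perm g.
Proof.
case: (prod_tpermP g) => ts -> dts.
have -> : sheet_perm b (\prod_(t <- ts) tperm t.1 t.2)
   = \prod_(t <- [seq ((u.1, b), (u.2, b)) | u <- ts]) tperm t.1 t.2.
  elim: ts {dts} => [|t ts IH]; first by rewrite !big_nil sheet_perm1.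
  by rewrite /= !big_cons sheet_permM IH sheet_perm_tperm.
rewrite !odd_perm_prod ?size_map // all_map.
by apply: sub_all dts => [[u v]] /=; apply: contra => /eqP [->].
Qed.

Definition flip_fun (P : {set E}) (x : E * bool) : E * bool := (x.1, x.2 (+) (x.1 \in P)).

Lemma flip_fun_inj P : injective (flip_fun P).
Proof. by move=> [x1 c1] [x2 c2] [e]; rewrite /= e => /addIb ->. Qed.

Definition flip_perm P := perm (@flip_fun_inj P).

Lemma odd_flip_perm P : odd_perm (flip_perm P) = odd #|P|.
Proof.
have [n] := ubnP #|P|; elim: n P => // n IH P /ltnSE.
have [->|[a aP]] := set_0Vmem P => Hn.
  suff -> : flip_perm set0 = 1 by rewrite odd_perm1 cards0.
  by apply/permP => [[x c]]; rewrite permE perm1 /flip_fun inE addbF.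
have -> : flip_perm P = tperm (a, false) (a, true) * flip_perm (P :\ a).
  apply/permP => [[x c]]; rewrite permM !permE /flip_fun /= !inE.
  have [->|nxa] := eqVneq x a; last by rewrite !xpair_eqE (negPf nxa) /= nxa.
  by rewrite aP; case: c; rewrite /= !xpair_eqE !eqxx.
rewrite odd_mul_tperm IH; last by rewrite (cardsD1 a) aP in Hn.
by rewrite (cardsD1 a P) aP xpair_eqE eqxx.
Qed.

Lemma card_porbits (s : {perm E}) : #|porbits s| = fcard s predT.
Proof.
have porbit_fconnect x y : (y \in porbit s x) = fconnect s x y.
  apply/porbitP/idP => [[i ->]|/iter_findex <-]; first by rewrite permX fconnect_iter.
  by exists (findex s x y); rewrite permX.
have symS : connect_sym (frel s) by apply: fconnect_sym; exact: perm_inj.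
rewrite /n_comp_mem /porbits.
rewrite -(card_in_imset (f := porbit s) (D := [pred x | roots (frel s) x && predT x])).
  apply: eq_card => C; apply/imsetP/imsetP => [[x _ ->]|[r _ ->]]; last by exists r.
  exists (froot s x); first by rewrite inE andbT; apply: roots_root.
  apply/setP => y; rewrite !porbit_fconnect; apply: (same_connect symS).
  exact: connect_root.
move=> x y /andP[/eqP rx _] /andP[/eqP ry _] exy.
have : y \in porbit s x by rewrite exy porbit_id.
by rewrite porbit_fconnect -(root_connect symS) rx ry => /eqP.
Qed.

End HalfEdgePermutations.

Lemma prodr_opp_at (I : finType) (R : comNzRingType) (i0 : I) (f g : I -> R) :
  f i0 = - g i0 -> (forall i, i != i0 -> f i = g i) ->
  \prod_i f i = - \prod_i g i.
Proof.
move=> fi0 fg; rewrite (bigD1 i0) // [in RHS](bigD1 i0) //= fi0 mulNr.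
by congr (- (_ * _)); apply: eq_bigr.
Qed.

Lemma multilinear_oppr (F : fieldType) (l n : nat)
    (g : {ffun 'I_n -> 'rV[F]_(l + l)} -> F) (x : {ffun 'I_n -> 'rV[F]_(l + l)}) (i : 'I_n) :
  multilinear g -> g [ffun j => if j == i then - x i else x j] = - g x.
Proof.
move=> gl; have := gl x i (-1) (x i) 0.
have -> : g [ffun j => if j == i then 0 else x j] = 0.
  have := gl x i 1 0 0; rewrite scale1r addr0 mul1r => /esym/eqP.
  by rewrite -subr_eq0 addrK => /eqP.
rewrite addr0 scaleN1r mulN1r addr0 => ->; congr (- g _).
by apply/ffunP => j; rewrite ffunE; case: eqP => // ->.
Qed.

Section LabelledTensors.
Variables (V E : finType) (ends : E -> V * V).
Variables (F : fieldType) (l : nat) (h : form_family F l).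
Hypothesis hh : exterior_form h.

Local Notation H := (E * bool)%type.
Local Notation hend := (hend ends).
Local Notation at_v := (at_v ends).
Local Notation deg := (deg ends).
Local Notation vec := 'rV[F]_(l + l).

Definition local_labelling (k : H -> nat) : Prop :=
  (forall x, 0 < k x <= deg (hend x))%N /\ (forall v, {in at_v v &, injective k}).

Lemma local_labelling_inj k x y : local_labelling k ->
  hend x = hend y -> k x = k y -> x = y.
Proof. by case=> _ kinj hxy; apply: (kinj (hend y)); rewrite inE ?hxy. Qed.

Definition label_half (k : H -> nat) (v : V) (j : nat) : option H :=
  [pick x | at_v v x && (k x == j)].

Lemma label_halfP k v j x : label_half k v j = Some x -> hend x = v /\ k x = j.
Proof. by rewrite /label_half; case: pickP => // y /andP[/eqP ? /eqP ?] [<-]. Qed.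

Lemma label_halfE k v x : local_labelling k -> hend x = v -> label_half k v (k x) = Some x.
Proof.
move=> [_ kinj] hx; rewrite /label_half; case: pickP => [y /andP[ay /eqP ky]|no].
  by congr Some; apply: (kinj v); rewrite // inE hx.
by move: (no x); rewrite /= /at_v /= hx !eqxx.
Qed.

Lemma label_slot k v x : local_labelling k -> hend x = v ->
  exists i : 'I_(deg v), k x = i.+1.
Proof.
case=> /(_ x) kx _ hx; rewrite hx in kx.
have lt : ((k x).-1 < deg v)%N by lia.
by exists (Ordinal lt); rewrite /= prednK //; case/andP: kx.
Qed.

Definition label_tensor (k : H -> nat) (Y : H -> vec) (v : V) : {ffun 'I_(deg v) -> vec} :=
  [ffun i : 'I_(deg v) => (if label_half k v i.+1 is Some x then Y x else 0) : vec].

Lemma eq_label_tensor k Y1 Y2 v : Y1 =1 Y2 -> label_tensor k Y1 v = label_tensor k Y2 v.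
Proof. by move=> eY; apply/ffunP => i; rewrite !ffunE; case: label_half. Qed.

Section Relabelling.
Variables (k1 k2 : H -> nat) (r : {perm H}).
Hypotheses (kl1 : local_labelling k1) (kl2 : local_labelling k2).
Hypotheses (hr : forall z, hend (r z) = hend z) (kr : forall z, k2 z = k1 (r z)).

Lemma label_half_relabel v j : label_half k2 v j = omap (r^-1)%g (label_half k1 v j).
Proof.
case E1: (label_half k1 v j) => [x|] /=.
  have [hx kx] := label_halfP E1.
  rewrite -kx -[x in k1 x](permKV r) -kr label_halfE //.
  by rewrite -hr permKV.
rewrite /label_half; case: pickP => // z /andP[/eqP hz /eqP kz].
by move: E1; rewrite -kz kr label_halfE // hr.
Qed.

Lemma label_tensor_relabel Y v : label_tensor k2 Y v = label_tensor k1 (Y \o (r^-1)%g) v.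
Proof. by apply/ffunP => i; rewrite !ffunE label_half_relabel; case: label_half. Qed.

End Relabelling.

Lemma prod_label_tensor_tperm k Y x y : local_labelling k -> x != y -> hend x = hend y ->
  \prod_v h (label_tensor k (Y \o tperm x y) v)
  = - \prod_v h (label_tensor k Y v).
Proof.
move=> kl nxy hxy; apply: (@prodr_opp_at V F (hend x)) => [|w wx]; last first.
  apply: congr1; apply/ffunP => i; rewrite !ffunE.
  case E1: label_half => [z|] //=; have [hz _] := label_halfP E1.
  by rewrite tpermD //; apply: contraNneq wx => e; rewrite -hz -e // hxy.
set v := hend x.
have [i ki] := label_slot kl (erefl v).
have [j kj] := label_slot kl (esym hxy).
have nij : i != j.
  apply: contraNneq nxy => eij; case: kl => _ kinj.
  by rewrite (kinj v x y) // ?inE -?hxy // ki kj eij.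
rewrite -((hh (deg v)).2 _ i j nij); congr (h _); apply/ffunP => t; rewrite !ffunE.
have [->|ti] := eqVneq t i; first by rewrite -ki -kj !label_halfE //= tpermL.
have [->|tj] := eqVneq t j.
  by rewrite -ki -kj !label_halfE //= tpermR.
case E1: label_half => [z|] //=; have [_ kz] := label_halfP E1.
by rewrite tpermD //; [move: ti | move: tj]; apply: contra_neq => e;
  apply/val_inj/succn_inj; rewrite -kz -e.
Qed.

Lemma prod_label_tensor_perm k Y (r : {perm H}) : local_labelling k ->
  (forall z, hend (r z) = hend z) ->
  \prod_v h (label_tensor k (Y \o r) v)
  = (-1) ^+ odd_perm r * \prod_v h (label_tensor k Y v).
Proof.
move=> kl; have [n] := ubnP #|[set z | r z != z]|; elim: n Y r => // n IH Y r.
case: (pickP (fun z => r z != z)) => [x rx|r1] /ltnSE moved hr; last first.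
  have -> : r = 1%g by apply/permP => z; rewrite perm1; apply/eqP/negbFE/r1.
  rewrite odd_perm1 mul1r; apply: eq_bigr => v _; congr h.
  by apply: eq_label_tensor => z; rewrite /= perm1.
set y := r x; pose r' := (r * tperm x y)%g.
have hxy : hend x = hend y by rewrite /y hr.
have nxy : x != y by rewrite eq_sym.
have rE : Y \o r =1 (Y \o tperm x y) \o r' by move=> z; rewrite /= permM tpermK.
have moved' : (#|[set z | r' z != z]| < n)%N.
  apply: leq_trans moved; apply: proper_card; apply/properP; split.
    apply/subsetP => z; rewrite !inE permM; apply: contra => /eqP rz.
    rewrite rz tpermD //; apply: contraNneq rx => e; first by rewrite e rz.
    have /perm_inj xz : r x = r z by rewrite rz.
    by rewrite xz rz.
  by exists x; rewrite !inE // permM -/y tpermR eqxx.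
have hr' z : hend (r' z) = hend z.
  by rewrite permM -(hr z); case: tpermP => [->|->|] //; rewrite hxy.
have -> : \prod_v h (label_tensor k (Y \o r) v)
         = \prod_v h (label_tensor k ((Y \o tperm x y) \o r') v).
  by apply: eq_bigr => v _; rewrite (eq_label_tensor _ _ rE).
rewrite IH // prod_label_tensor_tperm // mulrN -mulNr odd_permM odd_tperm nxy signr_addb.
by rewrite expr1 mulrN1 opprK.
Qed.

Lemma prod_label_tensor_negate k Y Y' z0 : local_labelling k ->
  (forall z, Y' z = if z == z0 then - Y z else Y z) ->
  \prod_v h (label_tensor k Y' v) = - \prod_v h (label_tensor k Y v).
Proof.
move=> kl Y'E; apply: (@prodr_opp_at V F (hend z0)) => [|w wz]; last first.
  congr h; apply/ffunP => t; rewrite !ffunE.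
  case E1: label_half => [z|] //; rewrite Y'E; have [hz _] := label_halfP E1.
  by case: eqP => // zz0; rewrite -hz zz0 eqxx in wz.
have [i ki] := label_slot kl (erefl (hend z0)).
rewrite -(multilinear_oppr _ i (hh _).1); congr h; apply/ffunP => t; rewrite !ffunE.
have [->|ti] := eqVneq t i; first by rewrite -ki label_halfE // Y'E eqxx.
case E1: label_half => [z|] //; have [_ kz] := label_halfP E1.
rewrite Y'E; case: eqP => // zz0; move: ti; rewrite -(inj_eq val_inj) -eqSS /=.
by rewrite -kz zz0 ki eqxx.
Qed.

Definition dual_index (i : 'I_(l + l)) : 'I_(l + l) :=
  match split i with inl j => rshift l j | inr j => lshift l j end.

Lemma split_lshift (j : 'I_l) : split (lshift l j) = inl j.
Proof. exact: (unsplitK (inl j)). Qed.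

Lemma split_rshift (j : 'I_l) : split (rshift l j) = inr j.
Proof. exact: (unsplitK (inr j)). Qed.

Lemma dual_indexK : involutive dual_index.
Proof.
move=> i; rewrite -[i]splitK /dual_index.
by case: (split i) => j; rewrite unsplitK ?split_lshift ?split_rshift.
Qed.

Definition twist (e0 : E) (phi : {ffun E -> 'I_(l + l)}) : {ffun E -> 'I_(l + l)} :=
  [ffun e => if e == e0 then dual_index (phi e) else phi e].

Lemma twistK e0 : involutive (twist e0).
Proof.
by move=> phi; apply/ffunP => e; rewrite !ffunE; case: eqP => // ->; rewrite dual_indexK.
Qed.

Definition arc_vector (om : E -> bool) (phi : {ffun E -> 'I_(l + l)}) (x : H) : vec :=
  if outgoing om x then fv F (phi x.1) else ev F (phi x.1).

(* Reversing e0 and twisting its index i turns the vectors (e_i, f_i) on its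
   (head, tail) into (e_i, -f_i) if i < l and into (-e_i, f_i) otherwise. *)
Lemma arc_vector_twist om om' e0 phi z :
  om' e0 = ~~ om e0 -> (forall e, e != e0 -> om' e = om e) ->
  arc_vector om' (twist e0 phi) z
  = if z == (e0, if (phi e0 < l)%N then om e0 else ~~ om e0)
    then - arc_vector om phi z else arc_vector om phi z.
Proof.
move=> om'e0 om'E; case: z => [e b]; rewrite /arc_vector /outgoing /= ffunE xpair_eqE.
have [-> /=|ne] := eqVneq e e0; last by rewrite om'E.
rewrite om'e0 /dual_index /fv -[phi e0]splitK.
case: (split (phi e0)) => j /=; rewrite ?split_lshift ?split_rshift ?ltn_ord.
  by case: b; case: (om e0); rewrite ?opprK.
by rewrite ltnNge leq_addr split_lshift /=; case: b; case: (om e0).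
Qed.

Definition tensor_sum (k : H -> nat) (om : E -> bool) : F :=
  \sum_(phi : {ffun E -> 'I_(l + l)}) \prod_v h (label_tensor k (arc_vector om phi) v).

Lemma tensor_sum_reverse_edge k om om' e0 : local_labelling k ->
  om' e0 = ~~ om e0 -> (forall e, e != e0 -> om' e = om e) ->
  tensor_sum k om' = - tensor_sum k om.
Proof.
move=> kl om'e0 om'E; rewrite /tensor_sum (reindex_inj (can_inj (twistK e0))) -sumrN.
by apply: eq_bigr => phi _; apply: prod_label_tensor_negate => // z; apply: arc_vector_twist.
Qed.

Lemma tensor_sum_orientation k om om' : local_labelling k ->
  tensor_sum k om' = (-1) ^+ #|[set e | om e != om' e]| * tensor_sum k om.
Proof.
move=> kl; have [n] := ubnP #|[set e | om e != om' e]|; elim: n om' => // n IH om'.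
case: (pickP (fun e => om e != om' e)) => [e0 d0|same] size_diff; last first.
  have -> : [set e | om e != om' e] = set0 by apply/setP => e; rewrite !inE same.
  rewrite cards0 mul1r /tensor_sum; apply: eq_bigr => phi _; apply: eq_bigr => v _.
  congr h; apply: eq_label_tensor => x; rewrite /arc_vector /outgoing.
  by move/negbFE/eqP: (same x.1) => ->.
pose om'' e := if e == e0 then om e0 else om' e.
have diff'' : [set e | om e != om'' e] = [set e | om e != om' e] :\ e0.
  by apply/setP => e; rewrite !inE /om''; case: (eqVneq e e0) => [->|]; rewrite ?eqxx.
rewrite (cardsD1 e0) inE d0 in size_diff *.
have -> : tensor_sum k om' = - tensor_sum k om''.
  apply: (tensor_sum_reverse_edge (e0 := e0)) => // [|e /negPf ne]; last by rewrite /om'' ne.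
  by rewrite /om'' eqxx; move: d0; case: (om e0); case: (om' e0).
by rewrite IH diff'' // exprS mulN1r mulNr.
Qed.

Lemma tensor_sum_relabel k1 k2 (r : {perm H}) om :
  local_labelling k1 -> local_labelling k2 ->
  (forall z, hend (r z) = hend z) -> (forall z, k2 z = k1 (r z)) ->
  tensor_sum k2 om = (-1) ^+ odd_perm r * tensor_sum k1 om.
Proof.
move=> kl1 kl2 hr kr; rewrite /tensor_sum mulr_sumr; apply: eq_bigr => phi _.
have hrV z : hend ((r^-1)%g z) = hend z by rewrite -[in RHS](permKV r z) hr.
rewrite -odd_permV -prod_label_tensor_perm //; apply: eq_bigr => v _.
by rewrite (label_tensor_relabel kl1 kl2 hr kr).
Qed.

End LabelledTensors.

Section Circuits.
Variables (V E : finType) (ends : E -> V * V).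
Hypothesis HG : eulerian_graph ends.

Local Notation H := (E * bool)%type.
Local Notation hend := (hend ends).
Local Notation deg := (deg ends).

Section OneOrdering.
Variables (om : E -> bool) (k : H -> nat).
Hypothesis Hk : compatible_ordering ends om k.

Lemma compatible_label x :
  outgoing om x = ~~ odd (k x) /\ (0 < k x <= deg (hend x))%N.
Proof.
have [_ in_lab _ out_lab] := Hk (hend x).
case o: (outgoing om x).
  have /out_lab[kx k0 kd] : exists2 y, y \in out_at ends om (hend x) & k y = k x.
    by exists x => //; rewrite inE /= o andbT; exact: eqxx.
  by rewrite kx k0 kd.
have /in_lab[kx k0 kd] : exists2 y, y \in in_at ends om (hend x) & k y = k x.
  by exists x => //; rewrite inE /= o andbT; exact: eqxx.
by rewrite kx k0 kd.
Qed.

Lemma compatible_local_labelling : local_labelling ends k.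
Proof.
split=> [x|v x y xv yv kxy]; first by case: (compatible_label x).
have [in_inj _ out_inj _] := Hk v.
have [ox _] := compatible_label x; have [oy _] := compatible_label y.
case ex: (outgoing om x); case ey: (outgoing om y).
- by apply: out_inj; rewrite // inE /= ?ex ?ey andbT; [exact: xv | exact: yv].
- by move: ox oy; rewrite ex ey kxy => <-.
- by move: ox oy; rewrite ex ey kxy => <-.
- by apply: in_inj; rewrite // inE /= ?ex ?ey andbT; [exact: xv | exact: yv].
Qed.

Definition head_half (e : E) : H := (e, ~~ om e).
Definition tail_half (e : E) : H := (e, om e).

Lemma kstep_exists e : exists e',
  hend (tail_half e') = hend (head_half e) /\ k (tail_half e') = (k (head_half e)).+1.
Proof.
set w := hend (head_half e).
have [odd_k /andP[k0 kd]] := compatible_label (head_half e).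
have {}odd_k : odd (k (head_half e)).
  by rewrite -[odd _]negbK -odd_k /outgoing /=; case: (om e).
have ltd : (k (head_half e) < deg w)%N.
  by rewrite ltn_neqAle kd andbT; apply: contraTneq (HG w) => <-; rewrite negbK.
have [_ _ _ out_lab] := Hk w.
have [[e' b] /andP[/eqP hy /eqP bE] ky] :
    exists2 y, y \in out_at ends om w & k y = (k (head_half e)).+1.
  by apply/out_lab; rewrite /= odd_k.
by exists e'; rewrite /tail_half -bE.
Qed.

Lemma kstep_spec e : hend (tail_half (kstep ends om k e)) = hend (head_half e) /\
  k (tail_half (kstep ends om k e)) = (k (head_half e)).+1.
Proof.
rewrite /kstep; case: pickP => [e' /andP[/eqP ? /eqP ?] //|none].
have [e' [he' ke']] := kstep_exists e.
by move: (none e'); rewrite /= -he' -ke' !eqxx.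
Qed.

Lemma kstep_unique e e' : hend (tail_half e') = hend (head_half e) ->
  k (tail_half e') = (k (head_half e)).+1 -> kstep ends om k e = e'.
Proof.
have [h1 k1] := kstep_spec e => h2 k2.
suff [] : tail_half (kstep ends om k e) = tail_half e' by [].
by apply: (local_labelling_inj compatible_local_labelling); rewrite ?h1 ?h2 ?k1 ?k2.
Qed.

Lemma kstep_inj : injective (kstep ends om k).
Proof.
move=> e1 e2 same; have [h1 k1] := kstep_spec e1; have [h2 k2] := kstep_spec e2.
rewrite same in h1 k1.
suff [] : head_half e1 = head_half e2 by [].
apply: (local_labelling_inj compatible_local_labelling); first by rewrite -h1 h2.
by apply: succn_inj; rewrite -k1 k2.
Qed.

Definition circuit_perm := perm kstep_inj.

Lemma odd_ncircuits : odd (ncircuits ends om k) = odd_perm circuit_perm (+) odd #|E|.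
Proof.
rewrite /odd_perm card_porbits addbC addbA addbb /ncircuits.
by congr odd; apply: eq_fcard => x; rewrite permE.
Qed.

Lemma s_h_sum_tensor_sum (F : fieldType) (l : nat) (h : form_family F l) :
  \sum_(phi : {ffun E -> 'I_(l + l)}) \prod_(v : V) h (deg v) (vtensor ends k F phi v)
  = tensor_sum ends h k om.
Proof.
apply: eq_bigr => phi _; apply: eq_bigr => v _; congr (h _ _); apply/ffunP => t.
rewrite !ffunE -[lab_edge _ _ _ _]/(omap fst (label_half ends k v t.+1)).
case E1: label_half => [x|] //=; have [_ kx] := label_halfP E1.
by have [o _] := compatible_label x; rewrite /arc_vector o kx /=; case: (odd t).
Qed.

End OneOrdering.

Section TwoOrderings.
Variables (om1 om2 : E -> bool) (k1 k2 : H -> nat).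
Hypotheses (Hk1 : compatible_ordering ends om1 k1) (Hk2 : compatible_ordering ends om2 k2).

Lemma relabelling_exists : exists r : {perm H},
  (forall z, hend (r z) = hend z) /\ (forall z, k2 z = k1 (r z)).
Proof.
have kl1 := compatible_local_labelling Hk1; have kl2 := compatible_local_labelling Hk2.
pose rf z := odflt z (label_half ends k1 (hend z) (k2 z)).
have rfP z : hend (rf z) = hend z /\ k1 (rf z) = k2 z.
  set v := hend z; have [_ /andP[k0 kd]] := compatible_label Hk2 z.
  have [_ in_lab _ out_lab] := Hk1 v.
  have [y yv ky] : exists2 y, hend y = v & k1 y = k2 z.
    case odd_k: (odd (k2 z)).
      have [y /andP[/eqP ? _] ?] : exists2 y, y \in in_at ends om1 v & k1 y = k2 z.
        by apply/in_lab; split.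
      by exists y.
    have [y /andP[/eqP ? _] ?] : exists2 y, y \in out_at ends om1 v & k1 y = k2 z.
      by apply/out_lab; rewrite odd_k; split.
    by exists y.
  by rewrite /rf -ky label_halfE.
have rf_inj : injective rf.
  move=> z1 z2 same; have [h1 e1] := rfP z1; have [h2 e2] := rfP z2.
  by apply: (local_labelling_inj kl2); rewrite -?h1 -?h2 -?e1 -?e2 same.
by exists (perm rf_inj); split => z; rewrite permE; case: (rfP z).
Qed.

Variable r : {perm H}.
Hypotheses (hr : forall z, hend (r z) = hend z) (kr : forall z, k2 z = k1 (r z)).

Lemma outgoing_relabel z : outgoing om1 (r z) = outgoing om2 z.
Proof.
have [o1 _] := compatible_label Hk1 (r z); have [o2 _] := compatible_label Hk2 z.
by rewrite o1 o2 kr.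
Qed.

Definition head_map e := (r (head_half om2 e)).1.
Definition tail_map e := (r (tail_half om2 e)).1.

Lemma relabel_head e : r (head_half om2 e) = head_half om1 (head_map e).
Proof.
have := outgoing_relabel (head_half om2 e); rewrite /head_map /head_half /outgoing /=.
by case: (r _) => a b /=; case: (om2 e); case: b; case: (om1 a).
Qed.

Lemma relabel_tail e : r (tail_half om2 e) = tail_half om1 (tail_map e).
Proof.
have := outgoing_relabel (tail_half om2 e); rewrite /tail_map /tail_half /outgoing /= eqxx.
by case: (r _) => a b /=; case: b; case: (om1 a).
Qed.

Lemma head_map_inj : injective head_map.
Proof.
by move=> e1 e2 same; have := relabel_head e1; rewrite same -relabel_head => /perm_inj[].
Qed.

Lemma tail_map_inj : injective tail_map.
Proof.
by move=> e1 e2 same; have := relabel_tail e1; rewrite same -relabel_tail => /perm_inj[].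
Qed.

Lemma kstep_relabel e : kstep ends om1 k1 (head_map e) = tail_map (kstep ends om2 k2 e).
Proof.
have [h2 k2S] := kstep_spec Hk2 e.
by apply: (kstep_unique Hk1); rewrite -relabel_tail -relabel_head ?hr ?h2 -?kr.
Qed.

(* After [flip_perm] sends tails to the sheet [true] and heads to the sheet
   [false], [r] acts sheetwise by [head_map] and [tail_map], while
   [kstep_relabel] reads circuit_perm Hk1 = head_map^-1 * circuit_perm Hk2 * tail_map. *)
Lemma odd_ncircuits_relabel : odd (ncircuits ends om1 k1)
  = odd (ncircuits ends om2 k2) (+) odd_perm r (+) odd #|[set e | om1 e != om2 e]|.
Proof.
pose hp := perm head_map_inj; pose tp := perm tail_map_inj.
have conj : (hp * circuit_perm Hk1 = circuit_perm Hk2 * tp)%g.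
  by apply/permP => e; rewrite !permM !permE; exact: kstep_relabel.
pose N1 := flip_perm [set e | ~~ om1 e]; pose N2 := flip_perm [set e | ~~ om2 e].
have sheets : (N2 * r * N1)%g = (sheet_perm false hp * sheet_perm true tp)%g.
  apply/permP => [[e []]]; rewrite !permM !permE /flip_fun /sheet_fun /= !inE.
    rewrite negbK -[(e, om2 e)]/(tail_half om2 e) relabel_tail /= permE.
    by case: (om1 _).
  rewrite -[(e, ~~ om2 e)]/(head_half om2 e) relabel_head /= permE.
  by case: (om1 _).
have flips : (N2 * N1)%g = flip_perm [set e | om1 e != om2 e].
  apply/permP => [[e b]]; rewrite !permM !permE /flip_fun /= !inE.
  by case: b; case: (om1 e); case: (om2 e).
have odd_hp_tp : odd_perm hp (+) odd_perm tp
    = odd_perm r (+) odd #|[set e | om1 e != om2 e]|.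
  rewrite -(odd_sheet_perm false hp) -(odd_sheet_perm true tp) -odd_permM -sheets.
  by rewrite -odd_flip_perm -flips !odd_permM addbAC addbC.
rewrite !odd_ncircuits -[circuit_perm Hk1](mulKg hp) conj !odd_permM odd_permV.
by rewrite -[in RHS]addbA -odd_hp_tp; case: (odd_perm hp); case: (odd_perm tp);
  case: (odd_perm (circuit_perm Hk2)); case: (odd #|E|).
Qed.

End TwoOrderings.
End Circuits.

Theorem proposition1 (F : numClosedFieldType) (l : nat)
  (h : form_family F l) (hh : exterior_form h)
  (V E : finType) (ends : E -> V * V) (HG : eulerian_graph ends)
  (om1 om2 : E -> bool) (k1 k2 : E * bool -> nat)
  (Ho1 : eulerian_orientation ends om1) (Hk1 : compatible_ordering ends om1 k1)
  (Ho2 : eulerian_orientation ends om2) (Hk2 : compatible_ordering ends om2 k2) :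
  s_h ends om1 k1 h = s_h ends om2 k2 h.
Proof.
have kl1 := compatible_local_labelling Hk1; have kl2 := compatible_local_labelling Hk2.
have [r [hr kr]] := relabelling_exists Hk1 Hk2.
rewrite /s_h (s_h_sum_tensor_sum Hk1) (s_h_sum_tensor_sum Hk2).
rewrite (tensor_sum_relabel hh om2 kl1 kl2 hr kr).
rewrite (tensor_sum_orientation hh om1 om2 kl1).
rewrite -signr_odd (odd_ncircuits_relabel HG Hk1 Hk2 hr kr) !signr_addb !signr_odd.
by rewrite !mulrA.
Qed.
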